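(* Let $a \leq b$ be natural numbers. Then \[ \alpha(\{a, a+1, \ldots, b\}) \geq \frac{a}{a+b} = \frac{1}{1 + \frac{b}{a}}. \]
   Context: For a finite $D \subset \mathbb{N} = \{1,2,\ldots\}$ and $n \geq 1$, the circulant graph $G_n$ with set of distances $D$ has vertex set $\{0, \ldots, n-1\}$, vertices $u, v$ (possibly equal) being adjacent iff $u - v \equiv d$ or $v - u \equiv d \pmod n$ for some $d \in D$. $\alpha(G)$ is the maximum size of an independent set (no two adjacent vertices, no looped vertex), and $\alpha(D) := \lim_{n\to\infty} \alpha(G_n)/n$ (which exists). *)

From Stdlib Require Import Reals.
From Coquelicot Require Import Coquelicot.
From mathcomp Require Import all_boot.

Set Implicit Arguments.
Unset Strict Implicit.
Unset Printing Implicit Defensive.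

(* Adjacency in the circulant graph G_n with distance set D (a finite subset
   of {1,2,...}, given as a list): vertices u, v of {0,...,n-1} (possibly
   equal) are adjacent iff u - v = d or v - u = d (mod n) for some d in D. *)
Definition circ_adj (D : seq nat) (n : nat) (u v : 'I_n) : bool :=
  has (fun d => ((v + d) %% n == u %% n) || ((u + d) %% n == v %% n)) D.

(* Independent set: no two (not necessarily distinct) vertices adjacent;
   in particular no looped vertex. *)
Definition circ_indep (D : seq nat) (n : nat) (S : {set 'I_n}) : bool :=
  [forall u in S, forall v in S, ~~ circ_adj D u v].

Definition alpha_circ (D : seq nat) (n : nat) : nat :=
  \max_(S : {set 'I_n} | circ_indep D S) #|S|.

Definition alphaD (D : seq nat) : R :=
  real (Lim_seq (fun n => (INR (alpha_circ D n) / INR n)%R)).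

(** Cut [Z_n] into consecutive blocks of length [a + b] and keep the first [a]
    vertices of every block that ends at least [b] before [n].  If [y] is kept
    and [a <= d <= b], then [r := y %% (a + b) < a] gives [a <= r + d < a + b],
    so [y + d] is not kept; and since no kept vertex is within [b] of [n], no
    difference wraps around modulo [n].  This independent set has at least
    [a n / (a + b) - O(1)] elements; together with [alpha_circ D n <= n],
    which keeps [Lim_seq] finite, this bounds [alphaD] from below. *)

From Stdlib Require Import Reals Lra.
From Coquelicot Require Import Coquelicot.
From mathcomp Require Import all_boot zify.

Set Implicit Arguments.
Unset Strict Implicit.

Open Scope nat_scope.

Section Circulant.

Variable D : seq nat.

Lemma alpha_circ_le n : alpha_circ D n <= n.
Proof.
apply/bigmax_leqP => S _.
by rewrite -[n in _ <= n]card_ord max_card.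
Qed.

Lemma circ_indep_card_le n (S : {set 'I_n}) :
  circ_indep D S -> #|S| <= alpha_circ D n.
Proof. exact: (@leq_bigmax_cond _ (@circ_indep D n) (fun S => #|S|)). Qed.

End Circulant.

Lemma modn_window_shift p a y d :
  y %% p < a -> a <= d -> d + a <= p -> a <= (y + d) %% p.
Proof.
move=> ry ad dp.
by rewrite -modnDml modn_small; lia.
Qed.

Section Window.

Variables (a b : nat).
Let p := a + b.

Definition window_set n : {set 'I_n} :=
  [set x : 'I_n | (x + b < n) && (x %% p < a)].

Lemma window_set_indep D n :
  {in D, forall d, a <= d <= b} -> circ_indep D (window_set n).
Proof.
move=> Dab; apply/forall_inP => u; rewrite inE => /andP [un ru].
apply/forall_inP => v; rewrite inE => /andP [vn rv].
apply/hasPn => d /Dab /andP [ad db].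
have dp : d + a <= p by rewrite /p; lia.
have [uv vu] : (v + d) %% n = v + d /\ (u + d) %% n = u + d.
  by split; apply: modn_small; lia.
rewrite uv vu !modn_small //.
apply/negP => /orP [] /eqP e.
- by have := modn_window_shift rv ad dp; rewrite e; lia.
- by have := modn_window_shift ru ad dp; rewrite e; lia.
Qed.

Lemma window_set_card n : (n - b) %/ p * a <= #|window_set n|.
Proof.
set m := (n - b) %/ p.
have mp : m * p <= n - b by apply: leq_divM.
have ap : a <= p by apply: leq_addr.
have blk (i : 'I_m) (j : 'I_a) : i * p + j < m * p.
  have := leq_mul (ltn_ord i) (leqnn p); have := ltn_ord j; lia.
pose f (ij : 'I_m * 'I_a) : 'I_n :=
  Ordinal (leq_trans (blk ij.1 ij.2) (leq_trans mp (leq_subr _ _))).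
have f_inj : injective f.
  move=> [i j] [i' j'] /(congr1 val) /= e.
  have jp (k : 'I_a) : k < p by have := ltn_ord k; lia.
  have p0 : 0 < p := leq_ltn_trans (leq0n _) (jp j).
  have := congr1 (divn^~ p) e; have := congr1 (modn^~ p) e.
  rewrite /= !modnMDl !modn_small // !divnMDl // !divn_small // !addn0.
  by move=> /val_inj -> /val_inj ->.
have -> : m * a = #|f @: setT| by rewrite card_imset // cardsT card_prod !card_ord.
apply/subset_leq_card/subsetP => _ /imsetP [[i j] _ ->].
have jp : j < p by have := ltn_ord j; lia.
rewrite inE /= modnMDl modn_small // ltn_ord andbT.
have := blk i j; lia.
Qed.

Lemma window_alpha_circ_ge D n :
  {in D, forall d, a <= d <= b} -> (n - b) %/ p * a <= alpha_circ D n.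
Proof.
move=> Dab.
exact: leq_trans (window_set_card n) (circ_indep_card_le (window_set_indep n Dab)).
Qed.

Lemma leq_window_blocks n : 0 < p -> n <= (n - b) %/ p * p + a + 2 * b.
Proof. by move=> p0; have := ltn_ceil (n - b) p0; rewrite /p; lia. Qed.

End Window.

Open Scope R_scope.

Lemma le_real_Lim_seq (u : nat -> R) (c K M : R) :
  (forall n, (0 < n)%nat -> c - K / INR n <= u n <= M) -> c <= real (Lim_seq u).
Proof.
move=> bnd.
have lim_c : is_lim_seq (fun n => c - K / INR n) c.
  have := is_lim_seq_minus' _ _ _ _ (is_lim_seq_const c)
    (is_lim_seq_scal_l _ K _ (is_lim_seq_inv _ _ is_lim_seq_INR ltac:(discriminate))).
  by rewrite /= Rmult_0_r Rminus_0_r.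
have low : Rbar_le c (Lim_seq u).
  rewrite -(is_lim_seq_unique _ _ lim_c).
  by apply: Lim_seq_le_loc; exists 1%nat => n /leP /bnd [].
have up : Rbar_le (Lim_seq u) M.
  rewrite -(Lim_seq_const M).
  by apply: Lim_seq_le_loc; exists 1%nat => n /leP /bnd [].
by move: low up; case: (Lim_seq u).
Qed.

Lemma block_density_bound (A B N m : R) :
  0 < A -> 0 <= B -> 0 < N -> N <= m * (A + B) + A + 2 * B ->
  A / (A + B) - A * (A + 2 * B) / (A + B) / N <= m * A / N.
Proof.
move=> A0 B0 N0 Nm.
have -> : A / (A + B) - A * (A + 2 * B) / (A + B) / N
          = A * (N - A - 2 * B) / (A + B) / N by field; lra.
have -> : m * A / N = A * (m * (A + B)) / (A + B) / N by field; lra.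
apply: Rmult_le_compat_r; first by left; apply: Rinv_0_lt_compat.
apply: Rmult_le_compat_r; first by left; apply: Rinv_0_lt_compat; lra.
by apply: Rmult_le_compat_l; lra.
Qed.

Theorem proposition3 (a b : nat) (ha : (1 <= a)%N) (hab : (a <= b)%N) :
  (INR a / INR (a + b) <= alphaD (iota a (b - a).+1))%R.
Proof.
set D := iota a (b - a).+1.
have Dab : {in D, forall d, (a <= d <= b)%N}.
  by move=> d; rewrite mem_iota; lia.
apply: (le_real_Lim_seq (K := INR a * (INR a + 2 * INR b) / (INR a + INR b))
                        (M := 1)) => n n0.
have Nn : 0 < INR n by apply: (lt_INR 0); apply/ltP.
split.
- set m := ((n - b) %/ (a + b))%N.
  have alpha_m : INR m * INR a <= INR (alpha_circ D n).
    by rewrite -mult_INR; apply/le_INR/leP/window_alpha_circ_ge.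
  have n_m : INR n <= INR m * (INR a + INR b) + INR a + 2 * INR b.
    have /leP/le_INR := leq_window_blocks n (ltn_addr b ha).
    by rewrite -/m !plus_INR !mult_INR !plus_INR; simpl INR; lra.
  have A0 : 0 < INR a by apply: (lt_INR 0); apply/ltP.
  rewrite plus_INR; apply: Rle_trans (block_density_bound A0 (pos_INR b) Nn n_m) _.
  apply: Rmult_le_compat_r alpha_m.
  by left; apply: Rinv_0_lt_compat.
- have /leP/le_INR alpha_n := alpha_circ_le D n.
  exact/(Rdiv_le_1 _ _ Nn).
Qed.
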